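(* In the setting described in the context, let $(u_1,\dots,u_n)\in C(U,W,\alpha)$ and set $\alpha_0=p_1-1$. Then: (1) for $i\in[n]$ and $j\in[0,i]$, $u_i([a,\alpha_j])\subseteq[a,j]$; (2) for every $i\in[n]$, $u_i^{-1}(i)\ge p_i$; (3) for every $i\in[n]$, $u_1^{-1}(i)=u_2^{-1}(i)=\cdots=u_i^{-1}(i)$.
   Context: Permutations: for integers $a\le n$, $S_{[a,n]}$ is the set of bijections of $\mathbb Z$ fixing every integer outside $[a,n]$, one-line notation $[w(a),\dots,w(n)]$; $\tau_{i,j}$ swaps $i<j$, $u\tau_{i,j}=u\circ\tau_{i,j}$; $\ell(u)$ = number of inversions; $u\lessdot_k u\tau_{i,j}$ if $i\le k<j$ and $\ell(u\tau_{i,j})=\ell(u)+1$; $u\xrightarrow{k}w$ if there is a chain $u=v_1\lessdot_k\cdots\lessdot_k v_s=w$ ($s\ge1$), $v_{t+1}=v_t\tau_{i_t,j_t}$, with $v_1(i_1)<\cdots<v_{s-1}(i_{s-1})$. For $\beta=(\beta_1,\dots,\beta_m)$, $C(u,w,\beta)$ is the set of $(v_1,\dots,v_{m+1})$ with $v_1=u$, $v_{m+1}=w$, $v_i\xrightarrow{\beta_i}v_{i+1}$. Setting: fix $a\le0<n$ and $A=\{(r,c):1\le r\le n,\ a\le c\le r\}$. Let $\gamma=(\gamma_N,\gamma_E,\gamma_S,\gamma_W)$ be a boundary condition of $A$: $\gamma_N(c)$ ($c\in[a,n]$) is the label of the pipe entering through the top edge of the top cell $(\max(c,1),c)$ of column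 $c$ or $\varnothing$; $\gamma_E(r)$ that of the pipe entering through the right edge of $(r,r)$ or $\varnothing$; $\gamma_S(c)$ that of the pipe exiting through the bottom edge of $(n,c)$ or $\varnothing$; $\gamma_W(r)$ that of the pipe exiting through the left edge of $(r,a)$ or $\varnothing$. Assume $\gamma_S(c)\ne\varnothing$ for $c\in[a,n]$, $\gamma_W(r)=\varnothing$ and $\gamma_N(r)\ne\varnothing$ for $r\in[n]$, and the non-$\varnothing$ values of $\gamma_N,\gamma_E$ are exactly $a,\dots,n$, increasing along the order: top edges of columns $a,\dots,1$, right edge of row 1, top edge of column 2, right edge of row 2, …, top edge of column $n$, right edge of row $n$ (the values of $\gamma_S$ are then also exactly $a,\dots,n$). Put $p_c=\gamma_N(c)$ ($c\in[n]$), $\alpha_i=p_{i+1}-1$ for $i\in[n-1]$, $\alpha=(\alpha_1,\dots,\alpha_{n-1})$. $P_r=\{w\in S_{[a,n]}:w(p_j)=j\ \forall j\in(r,n]\}$; $\iota_r:P_r\to S_{[a,r]}$ deletes the values $r+1,\dots,n$ from one-line notation. $W\in P_1$: $\iota_1(W)(\ell)=\gamma_N^{-1}(\ell)$ for $\ell\in[a,p_1]$ and $\iota_1(W)$ decreasing on $(p_1,1]$. $U\in S_{[a,n]}$: $U(\ell)=\gamma_S^{-1}(\ell)$ for $\ell\in[a,n]$. *)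

From Stdlib Require Import ZArith List Sorting.Sorted Bool.
Import ListNotations.
Open Scope Z_scope.

Definition zrange (lo hi : Z) : list Z :=
  map (fun k => lo + Z.of_nat k) (seq 0 (Z.to_nat (hi - lo + 1))).

Definition fixes_outside (lo hi : Z) (u : Z -> Z) : Prop :=
  forall x, x < lo \/ hi < x -> u x = x.

Definition is_bij (u : Z -> Z) : Prop :=
  (forall x y, u x = u y -> x = y) /\ (forall y, exists x, u x = y).

Definition Sperm (lo hi : Z) (u : Z -> Z) : Prop :=
  is_bij u /\ fixes_outside lo hi u.

Definition inv_window (lo hi : Z) (u : Z -> Z) : nat :=
  length (filter (fun p => (fst p <? snd p) && (u (snd p) <? u (fst p)))
                 (list_prod (zrange lo hi) (zrange lo hi))).

(* ell(u) = L : the (finite) number of inversions of the finitary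
   permutation u is L; computed on any window containing the support
   (all inversions lie in such a window). *)
Definition has_length (u : Z -> Z) (L : nat) : Prop :=
  exists lo hi, fixes_outside lo hi u /\ L = inv_window lo hi u.

Definition tau (i j : Z) (x : Z) : Z :=
  if x =? i then j else if x =? j then i else x.

Definition rtau (u : Z -> Z) (i j : Z) : Z -> Z := fun x => u (tau i j x).

Definition kcover (k : Z) (u : Z -> Z) (i j : Z) : Prop :=
  i <= k < j /\ exists L, has_length u L /\ has_length (rtau u i j) (S L).

(* v = v_1 <._k v_2 <._k ... <._k v_s = w, with v_{t+1} = v_t tau_{i_t,j_t},
   where ts = [(i_1,j_1); ...; (i_{s-1},j_{s-1})] *)
Fixpoint kpath (k : Z) (v : Z -> Z) (ts : list (Z * Z)) (w : Z -> Z) : Prop :=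
  match ts with
  | nil => v = w
  | (i, j) :: ts' => kcover k v i j /\ kpath k (rtau v i j) ts' w
  end.

Fixpoint path_vals (v : Z -> Z) (ts : list (Z * Z)) : list Z :=
  match ts with
  | nil => nil
  | (i, j) :: ts' => v i :: path_vals (rtau v i j) ts'
  end.

Definition karrow (k : Z) (u w : Z -> Z) : Prop :=
  exists ts, kpath k u ts w /\ Sorted Z.lt (path_vals u ts).

(* (v 1, ..., v (m+1)) \in C(u, w, beta) with beta = (beta 1, ..., beta m) *)
Definition inC (m : Z) (beta : Z -> Z) (u w : Z -> Z) (v : Z -> Z -> Z) : Prop :=
  v 1 = u /\ v (m + 1) = w /\
  forall i, 1 <= i <= m -> karrow (beta i) (v i) (v (i + 1)).

(* the boundary labels of gamma_N, gamma_E in the order: top edges of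
   columns a..1, right edge of row 1, top of column 2, right of row 2, ...,
   top of column n, right edge of row n *)
Definition boundary_seq (a n : Z) (gN gE : Z -> option Z) : list (option Z) :=
  map gN (zrange a 1) ++
  flat_map (fun r => [gE r; gN (r + 1)]) (zrange 1 (n - 1)) ++ [gE n].

Definition somes (l : list (option Z)) : list Z :=
  flat_map (fun o => match o with Some v => [v] | None => [] end) l.

(* iota_r : P_r -> S_[a,r]: delete the values r+1..n from the one-line
   notation [w(a),...,w(n)] and read the result as one-line notation *)
Definition iota_r (a n r : Z) (w : Z -> Z) : Z -> Z := fun k =>
  if (a <=? k) && (k <=? r) then
    nth (Z.to_nat (k - a)) (filter (fun v => v <=? r) (map w (zrange a n))) k
  else k.

From Stdlib Require Import ZArith List Lia Bool FunctionalExtensionality FinFun Permutation.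
Import ListNotations.
Open Scope Z_scope.

(* A k-cover v <._k v tau_{x,y} swaps an ascent v(x) < v(y) across k
   (x <= k < y), since swapping a descent would lower the number of
   inversions.  Say v has a bounded prefix (M, j) if positions a..M of its
   one-line notation carry values <= j.  W has the prefix (alpha_j, j) for
   every j: its values j > 1 sit at p_j, and by the shape of iota_1(W) the
   value 1 sits at p_1.  Running the chain u_1 -> ... -> u_n = W backwards,
   a swap at level alpha_i >= alpha_j cannot break the prefix (alpha_j, j),
   which gives (1), and (2) is (1) with j = i - 1.  Finally, in the step
   u_m -> u_(m+1) both swapped values lie at positions <= alpha_m of u_(m+1),
   hence are <= m, so values i > m keep their positions: this gives (3). *)

(** * Integer intervals *)

Lemma Z_interval_ind_up (P : Z -> Prop) lo hi :
  P lo -> (forall i, lo <= i < hi -> P i -> P (i + 1)) ->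
  forall i, lo <= i <= hi -> P i.
Proof.
  intros H0 HS i Hi.
  assert (G : forall d : nat, lo + Z.of_nat d <= hi -> P (lo + Z.of_nat d)).
  { induction d as [|d IH]; intros Hd.
    - now rewrite Z.add_0_r.
    - rewrite Nat2Z.inj_succ, <- Z.add_1_r, Z.add_assoc.
      apply HS; [lia|]. apply IH; lia. }
  replace i with (lo + Z.of_nat (Z.to_nat (i - lo))) by lia.
  apply G; lia.
Qed.

Lemma Z_interval_ind_down (P : Z -> Prop) lo hi :
  P hi -> (forall i, lo <= i < hi -> P (i + 1) -> P i) ->
  forall i, lo <= i <= hi -> P i.
Proof.
  intros H0 HS i Hi.
  assert (G : forall d : nat, lo <= hi - Z.of_nat d -> P (hi - Z.of_nat d)).
  { induction d as [|d IH]; intros Hd.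
    - now rewrite Z.sub_0_r.
    - apply HS; [lia|]. replace (hi - Z.of_nat (S d) + 1) with (hi - Z.of_nat d) by lia.
      apply IH; lia. }
  replace i with (hi - Z.of_nat (Z.to_nat (hi - i))) by lia.
  apply G; lia.
Qed.

Lemma in_zrange lo hi x : In x (zrange lo hi) <-> lo <= x <= hi.
Proof.
  unfold zrange. rewrite in_map_iff. split.
  - intros [k [<- Hk]]. apply in_seq in Hk. lia.
  - intros Hx. exists (Z.to_nat (x - lo)). split; [lia|]. apply in_seq. lia.
Qed.

Lemma NoDup_zrange lo hi : NoDup (zrange lo hi).
Proof.
  apply Injective_map_NoDup; [intros x y E; lia|]. apply seq_NoDup.
Qed.

Lemma length_zrange lo hi : length (zrange lo hi) = Z.to_nat (hi - lo + 1).
Proof. unfold zrange. now rewrite length_map, length_seq. Qed.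

Lemma nth_zrange lo hi k d :
  (k < Z.to_nat (hi - lo + 1))%nat -> nth k (zrange lo hi) d = lo + Z.of_nat k.
Proof.
  intros Hk. unfold zrange.
  rewrite nth_indep with (d' := (fun k : nat => lo + Z.of_nat k) 0%nat)
    by (rewrite length_map, length_seq; lia).
  rewrite (map_nth (fun k : nat => lo + Z.of_nat k)), seq_nth by lia. reflexivity.
Qed.

Lemma zrange_nil lo hi : hi < lo -> zrange lo hi = [].
Proof. intros. unfold zrange. now replace (Z.to_nat (hi - lo + 1)) with 0%nat by lia. Qed.

Lemma zrange_cons lo hi : lo <= hi -> zrange lo hi = lo :: zrange (lo + 1) hi.
Proof.
  intros. unfold zrange.
  replace (Z.to_nat (hi - lo + 1)) with (S (Z.to_nat (hi - (lo + 1) + 1))) by lia.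
  cbn [seq map]. rewrite <- seq_shift, map_map. f_equal; [lia|].
  apply map_ext. intros. lia.
Qed.

Lemma zrange_app lo m hi :
  lo <= m <= hi + 1 -> zrange lo hi = zrange lo (m - 1) ++ zrange m hi.
Proof.
  remember (Z.to_nat (m - lo)) as d eqn:Hd. revert lo Hd.
  induction d as [|d IH]; intros lo Hd Hm.
  - replace m with lo by lia. now rewrite (zrange_nil lo (lo - 1)) by lia.
  - rewrite (zrange_cons lo hi), (zrange_cons lo (m - 1)) by lia.
    cbn. f_equal. apply IH; lia.
Qed.

Lemma zrange_ordered lo hi s t r x y :
  zrange lo hi = s ++ x :: t ++ y :: r -> x < y.
Proof.
  intros E.
  assert (Len := length_zrange lo hi).
  rewrite E, length_app in Len. cbn in Len. rewrite length_app in Len. cbn in Len.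
  assert (Lx : nth (length s) (zrange lo hi) 0 = x).
  { rewrite E, app_nth2, Nat.sub_diag by lia. reflexivity. }
  assert (Ly : nth (length s + S (length t)) (zrange lo hi) 0 = y).
  { rewrite E, app_nth2 by lia.
    replace (length s + S (length t) - length s)%nat with (S (length t)) by lia.
    cbn. rewrite app_nth2, Nat.sub_diag by lia. reflexivity. }
  rewrite nth_zrange in Lx, Ly by lia. lia.
Qed.

(** * Inversions *)

Definition inversions (lo hi : Z) (u : Z -> Z) : list (Z * Z) :=
  filter (fun p => (fst p <? snd p) && (u (snd p) <? u (fst p)))
         (list_prod (zrange lo hi) (zrange lo hi)).

Lemma inv_window_inversions lo hi u : inv_window lo hi u = length (inversions lo hi u).
Proof. reflexivity. Qed.

Lemma In_inversions lo hi u x y :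
  In (x, y) (inversions lo hi u) <->
  lo <= x <= hi /\ lo <= y <= hi /\ x < y /\ u y < u x.
Proof.
  unfold inversions. rewrite filter_In, in_prod_iff, !in_zrange; cbn.
  rewrite andb_true_iff, !Z.ltb_lt. tauto.
Qed.

Lemma NoDup_list_prod {A B} (l1 : list A) (l2 : list B) :
  NoDup l1 -> NoDup l2 -> NoDup (list_prod l1 l2).
Proof.
  intros H1 H2. induction H1 as [|x l1 Hx H1 IH]; cbn; [constructor|].
  apply NoDup_app; auto.
  - apply Injective_map_NoDup; auto. intros y y' E. now injection E.
  - intros [x' y] Hin Hin'. apply in_map_iff in Hin as [y' [E _]].
    injection E as <- <-. apply in_prod_iff in Hin'. tauto.
Qed.

Lemma NoDup_inversions lo hi u : NoDup (inversions lo hi u).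
Proof. apply NoDup_filter, NoDup_list_prod; apply NoDup_zrange. Qed.

Lemma Sperm_position_cases lo hi u z : Sperm lo hi u ->
  (z < lo /\ u z = z) \/ (lo <= z <= hi /\ lo <= u z <= hi) \/ (hi < z /\ u z = z).
Proof.
  intros [[Hinj _] Hfix].
  destruct (Z_lt_le_dec z lo); [left; split; [lia | apply Hfix; lia]|].
  destruct (Z_lt_le_dec hi z); [right; right; split; [lia | apply Hfix; lia]|].
  right; left. split; [lia|].
  destruct (Z_lt_le_dec (u z) lo), (Z_lt_le_dec hi (u z)); try lia;
    assert (E : u (u z) = u z) by (apply Hfix; lia); apply Hinj in E; lia.
Qed.

Lemma fixes_outside_widen lo hi lo' hi' u :
  fixes_outside lo hi u -> lo' <= lo -> hi <= hi' -> fixes_outside lo' hi' u.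
Proof. intros F ? ? z Hz. apply F. lia. Qed.

Lemma inv_window_widen lo hi lo' hi' u : Sperm lo hi u -> lo' <= lo -> hi <= hi' ->
  inv_window lo' hi' u = inv_window lo hi u.
Proof.
  intros Hu Hlo Hhi. rewrite !inv_window_inversions.
  apply Permutation_length, NoDup_Permutation; try apply NoDup_inversions.
  intros [x y]. rewrite !In_inversions. split; [|lia].
  intros (Hx & Hy & Hxy & Hinv).
  destruct (Sperm_position_cases _ _ _ x Hu) as [[? Ex]|[[? ?]|[? Ex]]];
  destruct (Sperm_position_cases _ _ _ y Hu) as [[? Ey]|[[? ?]|[? Ey]]];
  rewrite ?Ex, ?Ey in *; lia.
Qed.

Lemma has_length_inv_window u L lo hi :
  is_bij u -> has_length u L -> fixes_outside lo hi u -> L = inv_window lo hi u.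
Proof.
  intros Hb [lo1 [hi1 [F1 ->]]] F.
  rewrite <- (inv_window_widen lo1 hi1 (Z.min lo lo1) (Z.max hi hi1)),
          <- (inv_window_widen lo hi (Z.min lo lo1) (Z.max hi hi1)) by first [split; assumption | lia].
  reflexivity.
Qed.

Ltac tau_cases :=
  unfold tau in *;
  repeat match goal with
  | H : (_, _) = (_, _) |- _ => injection H; clear H; intros
  | |- context [?x =? ?y] => destruct (Z.eqb_spec x y)
  | H : context [?x =? ?y] |- _ => destruct (Z.eqb_spec x y)
  | |- context [?x <? ?y] => destruct (Z.ltb_spec x y)
  | H : context [?x <? ?y] |- _ => destruct (Z.ltb_spec x y)
  end; subst; try lia; try reflexivity.

(* Sends an inversion of [u] to an inversion of [rtau u x y]: its image
   under [tau x y] when that is still an increasing pair, itself otherwise. *)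
Definition swap_pair (x y : Z) (pq : Z * Z) : Z * Z :=
  let (p, q) := pq in
  if tau x y p <? tau x y q then (tau x y p, tau x y q) else (p, q).

Lemma inv_window_swap_ascent lo hi u x y :
  fixes_outside lo hi u -> lo <= x -> x < y -> y <= hi -> u x < u y ->
  (inv_window lo hi u < inv_window lo hi (rtau u x y))%nat.
Proof.
  intros Hu Hx Hxy Hy Hasc. rewrite !inv_window_inversions.
  enough (Hle : (length ((x, y) :: map (swap_pair x y) (inversions lo hi u))
                 <= length (inversions lo hi (rtau u x y)))%nat)
    by (cbn in Hle; rewrite length_map in Hle; lia).
  apply NoDup_incl_length.
  - constructor.
    + rewrite in_map_iff. intros [[p q] [Hg Hin]]. rewrite In_inversions in Hin.
      unfold swap_pair in Hg. tau_cases.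
    + apply NoDup_map_NoDup_ForallPairs; [|apply NoDup_inversions].
      intros [p1 q1] [p2 q2] I1 I2 Hg. rewrite In_inversions in I1, I2.
      unfold swap_pair in Hg. tau_cases.
  - intros [p q] Hin. rewrite In_inversions. unfold rtau. destruct Hin as [E|Hin].
    + injection E as <- <-. tau_cases.
    + apply in_map_iff in Hin as [[p' q'] [Hg Hin]]. rewrite In_inversions in Hin.
      unfold swap_pair in Hg. tau_cases.
Qed.

(** * Covers *)

Lemma rtau_involutive v x y : rtau (rtau v x y) x y = v.
Proof. apply functional_extensionality. intros z. unfold rtau. f_equal. tau_cases. Qed.

Lemma is_bij_rtau v x y : is_bij v -> is_bij (rtau v x y).
Proof.
  intros [Hinj Hsurj]. split.
  - intros z z' E. apply Hinj in E. tau_cases.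
  - intros z. destruct (Hsurj z) as [w <-]. exists (tau x y w). unfold rtau. f_equal. tau_cases.
Qed.

(* Swapping a descent would lower the number of inversions. *)
Lemma kcover_ascent k v x y : is_bij v -> kcover k v x y -> x <= k < y /\ v x < v y.
Proof.
  intros Hb (Hk & L & HLv & HLw). split; [lia|].
  destruct (Z.lt_trichotomy (v x) (v y)) as [|[E|Hdesc]]; auto.
  - apply (proj1 Hb) in E. lia.
  - exfalso.
    pose proof HLv as [lo1 [hi1 [F1 _]]]. pose proof HLw as [lo2 [hi2 [F2 _]]].
    set (lo := Z.min (Z.min lo1 lo2) x). set (hi := Z.max (Z.max hi1 hi2) y).
    set (w := rtau v x y) in *.
    assert (Bw : is_bij w) by now apply is_bij_rtau.
    assert (Fw : fixes_outside lo hi w) by (apply (fixes_outside_widen lo2 hi2); auto; lia).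
    assert (Fv : fixes_outside lo hi v) by (apply (fixes_outside_widen lo1 hi1); auto; lia).
    assert (Hv : L = inv_window lo hi v) by (apply has_length_inv_window; auto).
    assert (Hw : S L = inv_window lo hi w) by (apply has_length_inv_window; auto).
    assert (Hasc : w x < w y) by (unfold w, rtau; tau_cases).
    pose proof (inv_window_swap_ascent lo hi w x y Fw ltac:(lia) ltac:(lia) ltac:(lia) Hasc).
    unfold w in *. rewrite rtau_involutive in *. lia.
Qed.

Lemma Sperm_rtau_ascent a n v x y : Sperm a n (rtau v x y) -> x < y -> v x < v y ->
  Sperm a n v /\ a <= x.
Proof.
  intros Hw Hxy Hasc.
  assert (Wx : rtau v x y x = v y) by (unfold rtau; tau_cases).
  assert (Wy : rtau v x y y = v x) by (unfold rtau; tau_cases).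
  assert (Hxy_in : a <= x /\ y <= n).
  { destruct (Sperm_position_cases _ _ _ x Hw) as [[? ?]|[[? ?]|[? ?]]];
    destruct (Sperm_position_cases _ _ _ y Hw) as [[? ?]|[[? ?]|[? ?]]]; lia. }
  split; [split|lia].
  - rewrite <- (rtau_involutive v x y). apply is_bij_rtau, Hw.
  - intros z Hz. rewrite <- (rtau_involutive v x y). unfold rtau at 1.
    replace (tau x y z) with z by tau_cases. apply Hw. lia.
Qed.

Lemma kcover_back a n k v x y : Sperm a n (rtau v x y) -> kcover k v x y ->
  Sperm a n v /\ a <= x /\ x <= k < y /\ v x < v y.
Proof.
  intros Hw Hc.
  assert (Hb : is_bij v)
    by (rewrite <- (rtau_involutive v x y); apply is_bij_rtau, Hw).
  destruct (kcover_ascent k v x y Hb Hc) as [Hk Hasc].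
  destruct (Sperm_rtau_ascent a n v x y Hw ltac:(lia) Hasc). tauto.
Qed.

(** * Bounded prefixes *)

Definition bounded_prefix (a M j : Z) (v : Z -> Z) : Prop :=
  forall x, a <= x <= M -> v x <= j.

Lemma bounded_prefix_swap_ascent a M j v x y : M < y -> v x < v y ->
  bounded_prefix a M j (rtau v x y) -> bounded_prefix a M j v.
Proof.
  intros Hy Hasc Hw z Hz. specialize (Hw z Hz). unfold rtau in Hw.
  destruct (Z.eq_dec z x) as [->|]; [|replace (tau x y z) with z in Hw by tau_cases];
  tau_cases.
Qed.

(* Both swapped values lie below [j], so larger values keep their positions. *)
Lemma swap_ascent_large_values a k j v x y i z : a <= x <= k -> k < y -> v x < v y ->
  bounded_prefix a k j (rtau v x y) -> j < i -> (rtau v x y z = i <-> v z = i).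
Proof.
  intros Hx Hy Hasc Hw Hi.
  assert (Hvy : v y <= j) by (specialize (Hw x Hx); unfold rtau in Hw; tau_cases).
  unfold rtau. tau_cases; split; intros; lia.
Qed.

Section KPath.

Variables (a n k : Z).

Lemma kpath_Sperm_back ts : forall v w, kpath k v ts w -> Sperm a n w -> Sperm a n v.
Proof.
  induction ts as [|[x y] ts IH]; cbn; intros v w Hp Hw; [now subst|].
  destruct Hp as [Hc Hp]. apply (kcover_back a n k v x y); eauto.
Qed.

Lemma kpath_bounded_prefix_back M j ts : M <= k ->
  forall v w, kpath k v ts w -> Sperm a n w ->
  bounded_prefix a M j w -> bounded_prefix a M j v.
Proof.
  intros HM. induction ts as [|[x y] ts IH]; cbn; intros v w Hp Hw Hbd; [now subst|].
  destruct Hp as [Hc Hp].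
  assert (Hw' : Sperm a n (rtau v x y)) by (eapply kpath_Sperm_back; eauto).
  destruct (kcover_back a n k v x y Hw' Hc) as (_ & _ & Hk & Hasc).
  apply (bounded_prefix_swap_ascent a M j v x y); [lia | auto |]. eauto.
Qed.

Lemma kpath_large_values j i ts : j < i ->
  forall v w, kpath k v ts w -> Sperm a n w -> bounded_prefix a k j w ->
  forall z, v z = i <-> w z = i.
Proof.
  intros Hi. induction ts as [|[x y] ts IH]; cbn; intros v w Hp Hw Hbd z; [now subst|].
  destruct Hp as [Hc Hp].
  assert (Hw' : Sperm a n (rtau v x y)) by (eapply kpath_Sperm_back; eauto).
  destruct (kcover_back a n k v x y Hw' Hc) as (_ & Hx & Hk & Hasc).
  rewrite <- (IH _ _ Hp Hw Hbd z).
  symmetry. apply (swap_ascent_large_values a k j); auto; try lia.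
  eapply kpath_bounded_prefix_back; eauto. lia.
Qed.

End KPath.

(** * The labels [p] along the boundary *)

Lemma boundary_seq_window a n gN gE c : a <= 0 -> 1 <= c <= n - 1 ->
  exists l1 l3, boundary_seq a n gN gE = l1 ++ gN c :: gE c :: gN (c + 1) :: l3.
Proof.
  intros Ha Hc. unfold boundary_seq.
  destruct (Z.eq_dec c 1) as [->|].
  - rewrite (zrange_app a 1 1), (zrange_cons 1 1), (zrange_nil (1 + 1) 1),
      (zrange_cons 1 (n - 1)) by lia.
    exists (map gN (zrange a (1 - 1))),
      (flat_map (fun r => [gE r; gN (r + 1)]) (zrange (1 + 1) (n - 1)) ++ [gE n]).
    rewrite map_app. cbn. now rewrite <- !app_assoc.
  - rewrite (zrange_app 1 (c - 1) (n - 1)), (zrange_cons (c - 1) (n - 1)) by lia.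
    replace (c - 1 + 1) with c by lia.
    rewrite (zrange_cons c (n - 1)), flat_map_app by lia. cbn.
    replace (c - 1 + 1) with c by lia.
    exists (map gN (zrange a 1) ++ flat_map (fun r => [gE r; gN (r + 1)]) (zrange 1 (c - 1 - 1))
              ++ [gE (c - 1)]),
      (flat_map (fun r => [gE r; gN (r + 1)]) (zrange (c + 1) (n - 1)) ++ [gE n]).
    now rewrite <- !app_assoc.
Qed.

Lemma gN_in_boundary_seq a n gN gE c : a <= 0 -> 1 <= c <= n ->
  In (gN c) (boundary_seq a n gN gE).
Proof.
  intros Ha Hc. unfold boundary_seq. apply in_or_app.
  destruct (Z.eq_dec c 1) as [->|].
  - left. apply in_map, in_zrange. lia.
  - right. apply in_or_app. left. apply in_flat_map. exists (c - 1).
    split; [apply in_zrange; lia|]. cbn. right. left. f_equal. lia.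
Qed.

Lemma somes_window l1 x o y l3 :
  somes (l1 ++ Some x :: o :: Some y :: l3) = somes l1 ++ x :: somes [o] ++ y :: somes l3.
Proof. unfold somes. rewrite flat_map_app. cbn. now destruct o. Qed.

Lemma In_somes l v : In (Some v) l -> In v (somes l).
Proof. intros. unfold somes. apply in_flat_map. exists (Some v). cbn. auto. Qed.

Section Boundary.

Variables (a n : Z) (gN gE : Z -> option Z) (p : Z -> Z).
Hypothesis ha : a <= 0.
Hypothesis hNE : somes (boundary_seq a n gN gE) = zrange a n.
Hypothesis hp : forall c, 1 <= c <= n -> gN c = Some (p c).

Lemma boundary_p_lt_succ c : 1 <= c <= n - 1 -> p c < p (c + 1).
Proof.
  intros Hc. destruct (boundary_seq_window a n gN gE c ha Hc) as [l1 [l3 E]].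
  rewrite E, (hp c), (hp (c + 1)), somes_window in hNE by lia.
  symmetry in hNE. eapply zrange_ordered; eauto.
Qed.

Lemma boundary_p_monotone c d : 1 <= c <= d -> d <= n -> p c <= p d.
Proof.
  intros Hcd Hd. pattern d. apply (Z_interval_ind_up _ c n); [lia | | lia].
  intros e He IH. pose proof (boundary_p_lt_succ e ltac:(lia)). lia.
Qed.

Lemma boundary_p_range c : 1 <= c <= n -> a <= p c <= n.
Proof.
  intros Hc. apply in_zrange. rewrite <- hNE. apply In_somes.
  rewrite <- (hp c Hc). apply gN_in_boundary_seq; auto.
Qed.

End Boundary.

(** * The permutation [W] *)

Lemma iota_r_prefix a n r w x : a <= x <= r -> x <= n ->
  (forall y, a <= y <= x -> w y <= r) -> iota_r a n r w x = w x.
Proof.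
  intros Hx Hxn Hpre. unfold iota_r.
  replace ((a <=? x) && (x <=? r)) with true by (symmetry; apply andb_true_iff; lia).
  rewrite (zrange_app a (x + 1) n), map_app, filter_app by lia.
  replace (x + 1 - 1) with x by lia.
  rewrite forallb_filter_id.
  2:{ apply forallb_forall. intros z Hz. apply in_map_iff in Hz as [y [<- Hy]].
      apply in_zrange in Hy. apply Z.leb_le, Hpre. lia. }
  rewrite app_nth1 by (rewrite length_map, length_zrange; lia).
  rewrite nth_indep with (d' := w a) by (rewrite length_map, length_zrange; lia).
  rewrite map_nth, nth_zrange by lia. f_equal. lia.
Qed.

Lemma iota_r_above a n r w x : r < x -> iota_r a n r w x = x.
Proof.
  intros Hx. unfold iota_r.
  now replace ((a <=? x) && (x <=? r)) with false by (symmetry; apply andb_false_iff; lia).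
Qed.

Section Initial.

Variables (a n : Z) (gN : Z -> option Z) (p W : Z -> Z).
Hypothesis p_mono : forall c d, 1 <= c <= d -> d <= n -> p c <= p d.
Hypothesis p_range : forall c, 1 <= c <= n -> a <= p c <= n.
Hypothesis hp : forall c, 1 <= c <= n -> gN c = Some (p c).
Hypothesis hW : Sperm a n W.
Hypothesis hWP : forall j, 1 < j <= n -> W (p j) = j.
Hypothesis hW1 : forall l, a <= l <= p 1 -> gN (iota_r a n 1 W l) = Some l.

Lemma W_large_value_position y : a <= y <= n -> 1 < W y -> p (W y) = y.
Proof.
  intros Hy HWy.
  destruct (Sperm_position_cases _ _ _ y hW) as [[? ?]|[[? ?]|[? ?]]]; try lia.
  apply (proj1 (proj1 hW)). apply hWP. lia.
Qed.

Lemma W_bounded_prefix j : 0 <= j <= n - 1 -> bounded_prefix a (p (j + 1) - 1) j W.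
Proof.
  intros Hj x Hx.
  pose proof (p_range (j + 1) ltac:(lia)).
  destruct (Sperm_position_cases _ _ _ x hW) as [[? ?]|[[? HWx]|[? ?]]]; try lia.
  destruct (Z_le_gt_dec (W x) j) as [|Hgt]; auto. exfalso.
  destruct (Z.eq_dec (W x) 1) as [E1|E1].
  - assert (j = 0) by lia. subst j. cbn in Hx.
    destruct (Z_le_gt_dec x 1).
    + assert (Hpre : forall y, a <= y <= x -> W y <= 1).
      { intros y Hy. destruct (Z_le_gt_dec (W y) 1); auto.
        pose proof (W_large_value_position y ltac:(lia) ltac:(lia)).
        pose proof (p_mono 1 (W y)).
        destruct (Sperm_position_cases _ _ _ y hW) as [[? ?]|[[? ?]|[? ?]]]; lia. }
      pose proof (hW1 x ltac:(lia)) as G.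
      rewrite iota_r_prefix, E1, hp in G by (auto; lia).
      injection G. lia.
    + pose proof (hW1 x ltac:(lia)) as G.
      rewrite iota_r_above, hp in G by lia. injection G as G.
      pose proof (p_mono 1 x). lia.
  - pose proof (W_large_value_position x ltac:(lia) ltac:(lia)).
    pose proof (p_mono (j + 1) (W x)). lia.
Qed.

End Initial.

(** * The chain [u] *)

Section Chain.

Variables (a n : Z) (p : Z -> Z) (u : Z -> Z -> Z).
Hypothesis ha : a <= 0.
Hypothesis p_mono : forall c d, 1 <= c <= d -> d <= n -> p c <= p d.
Hypothesis hstep : forall i, 1 <= i <= n - 1 -> karrow (p (i + 1) - 1) (u i) (u (i + 1)).
Hypothesis hlast : Sperm a n (u n).
Hypothesis hlast_bounded :
  forall j, 0 <= j <= n - 1 -> bounded_prefix a (p (j + 1) - 1) j (u n).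

Lemma chain_Sperm i : 1 <= i <= n -> Sperm a n (u i).
Proof.
  intros Hi. pattern i. apply (Z_interval_ind_down _ 1 n); auto.
  intros m Hm IH.
  destruct (hstep m ltac:(lia)) as [ts [Hp _]].
  eapply kpath_Sperm_back; eauto.
Qed.

Lemma chain_bounded_prefix i : 1 <= i <= n ->
  forall j, 0 <= j <= i -> j <= n - 1 -> bounded_prefix a (p (j + 1) - 1) j (u i).
Proof.
  intros Hi. pattern i. apply (Z_interval_ind_down _ 1 n); [intros; apply hlast_bounded; lia | | lia].
  intros m Hm IH j Hj Hjn.
  destruct (hstep m ltac:(lia)) as [ts [Hp _]].
  eapply kpath_bounded_prefix_back; eauto.
  - pose proof (p_mono (j + 1) (m + 1)). lia.
  - apply chain_Sperm. lia.
  - apply IH; lia.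
Qed.

Lemma chain_values_in_window i j x : 1 <= i <= n -> 0 <= j <= i -> j <= n - 1 ->
  a <= x <= p (j + 1) - 1 -> a <= u i x <= j.
Proof.
  intros Hi Hj Hjn Hx.
  pose proof (chain_bounded_prefix i Hi j Hj Hjn x Hx).
  destruct (Sperm_position_cases _ _ _ x (chain_Sperm i Hi)) as [[? ?]|[[? ?]|[? ?]]]; lia.
Qed.

Lemma chain_position_lower_bound i x : 1 <= i <= n -> u i x = i -> p i <= x.
Proof.
  intros Hi Hx.
  destruct (Sperm_position_cases _ _ _ x (chain_Sperm i Hi)) as [[? ?]|[[? ?]|[? ?]]]; try lia.
  destruct (Z_le_gt_dec (p i) x); auto.
  pose proof (chain_bounded_prefix i Hi (i - 1) ltac:(lia) ltac:(lia) x) as Hbd.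
  replace (i - 1 + 1) with i in Hbd by lia.
  specialize (Hbd ltac:(lia)). lia.
Qed.

Lemma chain_position_stable i k x : 1 <= k <= i -> i <= n -> (u k x = i <-> u 1 x = i).
Proof.
  intros Hk Hi. pattern k. apply (Z_interval_ind_up _ 1 i); [tauto | | lia].
  intros m Hm IH. rewrite <- IH.
  destruct (hstep m ltac:(lia)) as [ts [Hp _]].
  symmetry. apply (kpath_large_values a n (p (m + 1) - 1) m i ts); auto; [lia | apply chain_Sperm; lia |].
  apply chain_bounded_prefix; lia.
Qed.

End Chain.

Theorem lemma4p28
  (a n : Z) (gN gE gS gW : Z -> option Z) (p : Z -> Z)
  (U W : Z -> Z) (u : Z -> Z -> Z)
  (ha : a <= 0) (hn : 0 < n)
  (* boundary condition gamma *)
  (hS : forall c, a <= c <= n -> gS c <> None)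
  (hW : forall r, 1 <= r <= n -> gW r = None)
  (hN : forall r, 1 <= r <= n -> gN r <> None)
  (hNE : somes (boundary_seq a n gN gE) = zrange a n)
  (* p_c = gamma_N(c) *)
  (hp : forall c, 1 <= c <= n -> gN c = Some (p c))
  (* W in P_1 with the prescribed iota_1(W) *)
  (hWperm : Sperm a n W)
  (hWP : forall j, 1 < j <= n -> W (p j) = j)
  (hW1 : forall l, a <= l <= p 1 -> gN (iota_r a n 1 W l) = Some l)
  (hW2 : forall x y, p 1 < x -> x < y -> y <= 1 ->
           iota_r a n 1 W y < iota_r a n 1 W x)
  (* U(l) = gamma_S^{-1}(l) *)
  (hUperm : Sperm a n U)
  (hU : forall l, a <= l <= n -> gS (U l) = Some l)
  (* (u_1, ..., u_n) in C(U, W, alpha), alpha_i = p_{i+1} - 1 *)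
  (hC : inC (n - 1) (fun i => p (i + 1) - 1) U W u) :
  (* (1), with alpha_j = p_{j+1} - 1 (alpha_0 = p_1 - 1) *)
  (forall i j x, 1 <= i <= n -> 0 <= j <= i -> j <= n - 1 ->
     a <= x <= p (j + 1) - 1 -> a <= u i x <= j) /\
  (* (2) *)
  (forall i x, 1 <= i <= n -> u i x = i -> p i <= x) /\
  (* (3) *)
  (forall i k x, 1 <= k <= i -> i <= n -> (u k x = i <-> u 1 x = i)).
Proof.
  destruct hC as (_ & hun & hstep).
  replace (n - 1 + 1) with n in hun by lia.
  pose proof (boundary_p_monotone a n gN gE p ha hNE hp) as p_mono.
  pose proof (boundary_p_range a n gN gE p ha hNE hp) as p_range.
  assert (hlast : Sperm a n (u n)) by now rewrite hun.
  assert (hlast_bounded : forall j, 0 <= j <= n - 1 ->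
            bounded_prefix a (p (j + 1) - 1) j (u n))
    by (rewrite hun; apply (W_bounded_prefix a n gN); auto).
  split; [|split].
  - apply (chain_values_in_window a n p u); auto.
  - apply (chain_position_lower_bound a n p u); auto.
  - apply (chain_position_stable a n p u); auto.
Qed.
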